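(* Under Strategy 1 (described in the context), let $U_h(\omega)$ be the number of uncles created during the attack cycle $\omega$ that are referred by nephew blocks mined by the honest miners, in $\omega$ or in a later cycle. Then $$\mathbb{E}[U_h]=p^2q+\bigl(p+(1-\gamma)p^2q\bigr)\left(\frac{q^2}{p}\bigl(1-q^{n_1-1}\bigr)\gamma+(1-\gamma)pq^2\,\frac{1-(pq)^{n_1-1}}{1-pq}\right).$$
   Context: Honest hashrate $p$, attacker hashrate $q$, $p+q=1$, $0<q<p$; $\gamma\in[0,1]$ is the fraction of honest hashrate mining on the attacker's block during a public competition between equal-height blocks. Attack cycles are i.i.d. words in S (attacker block) and H (honest block): H, SHS, SHH, or SSwH with $w$ a Dyck word; $\mathbb{P}[H]=p$, $\mathbb{P}[SHS]=pq^2$, $\mathbb{P}[SHH]=p^2q$, $\mathbb{P}[SSwH]=q^2p(pq)^{|w|}$ ($|w|$ half the length of $w$). In SHH the second honest block is built on the attacker's block with probability $\gamma$ and on the first honest block with probability $1-\gamma$. Ethereum rules: an uncle is a non-official block whose parent is official; a nephew (official block) may refer an uncle at distance (height difference) at most $n_1$ ($n_1\ge2$ an integer). Strategy 1: the attacker withholds his blocks, and each time the honest miners publish a block he publishes the part of his secret fork of the same height as the public honest chain (a fraction $\gamma$ of honest hashrate then mines on the attacker's branch); the attacker's fork wins in cycles starting with SS; all miners refer all possible uncles. *)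

From Stdlib Require Import Reals List Arith Bool.
Import ListNotations.

Inductive miner := Att (* S: attacker block *) | Hon (* H: honest block *).

Definition miner_eqb (a b : miner) : bool :=
  match a, b with Att, Att | Hon, Hon => true | _, _ => false end.

Fixpoint dyck_aux (k : nat) (w : list miner) : bool :=
  match w with
  | [] => Nat.eqb k 0
  | Att :: w' => dyck_aux (S k) w'
  | Hon :: w' => match k with O => false | S k' => dyck_aux k' w' end
  end.
Definition is_dyck (w : list miner) : bool := dyck_aux 0 w.

Definition is_cycleb (c : list miner) : bool :=
  match c with
  | [Hon] => true
  | [Att; Hon; Att] => true
  | [Att; Hon; Hon] => true
  | Att :: Att :: r =>
      match r with
      | [] => false
      | _ => miner_eqb (last r Att) Hon && is_dyck (removelast r)
      end
  | _ => false
  end.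

Open Scope R_scope.

Definition cyc_prob (p q : R) (c : list miner) : R :=
  fold_right (fun (m : miner) (acc : R) => (match m with Att => q | Hon => p end) * acc) 1 c.

(* Each honest block of a cycle carries an independent bit: true (prob gamma)
   = "mined on the attacker's branch" when there is a public competition;
   the bit is ignored where no competition occurs (it then integrates to 1). *)
Definition bits_prob (g : R) (bs : list bool) : R :=
  fold_right (fun (b : bool) (acc : R) => (if b then g else 1 - g) * acc) 1 bs.

Close Scope R_scope.

Definition nHon (c : list miner) : nat := length (filter (fun m => miner_eqb m Hon) c).

(** * Blocks.  A block's identifier is its mining time (0 = the official
    block on which the cycle starts). *)

Record block := mkBlock {
  bid : nat;
  bminer : miner;
  bheight : nat;
  bparent : nat;
  bmined : nat;
  bpub : nat;
  boff : bool       (* belongs to the official chain *)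
}.

Definition base_block : block := mkBlock 0 Hon 0 0 0 0 true.

(* 1-based position in w of the k-th (1-based) occurrence of m. *)
Fixpoint occ_pos (m : miner) (w : list miner) (k : nat) : nat :=
  match w with
  | [] => O
  | x :: w' =>
      if miner_eqb x m then (if Nat.eqb k 1 then 1%nat else S (occ_pos m w' (k - 1)))
      else S (occ_pos m w' k)
  end.

(* Blocks produced by Strategy 1 during one cycle c, started at time t0 on the
   official block b0 of height h0, with honest parent bits bs.
   Returns the blocks and (id, height) of the last official block. *)
Definition cycle_blocks (t0 b0 h0 : nat) (c : list miner) (bs : list bool)
  : list block * (nat * nat) :=
  let cbit j := nth (j - 1) bs false in
  match c with
  | [Hon] =>
      ([mkBlock (t0+1) Hon (h0+1) b0 (t0+1) (t0+1) true], (t0+1, h0+1)%nat)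
  | [Att; Hon; Att] =>
      ([mkBlock (t0+1) Att (h0+1) b0 (t0+1) (t0+2) true;
        mkBlock (t0+2) Hon (h0+1) b0 (t0+2) (t0+2) false;
        mkBlock (t0+3) Att (h0+2) (t0+1) (t0+3) (t0+3) true], (t0+3, h0+2)%nat)
  | [Att; Hon; Hon] =>
      let g := cbit 2%nat in
      ([mkBlock (t0+1) Att (h0+1) b0 (t0+1) (t0+2) g;
        mkBlock (t0+2) Hon (h0+1) b0 (t0+2) (t0+2) (negb g);
        mkBlock (t0+3) Hon (h0+2) (if g then t0+1 else t0+2) (t0+3) (t0+3) true],
       (t0+3, h0+2)%nat)
  | _ =>
      (* S S w H : the attacker's fork wins *)
      let a := (length c - nHon c)%nat in
      let b := nHon c in
      let tS i := (t0 + occ_pos Att c i)%nat in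
      let tH j := (t0 + occ_pos Hon c j)%nat in
      (map (fun i => mkBlock (tS i) Att (h0+i)
                       (if Nat.eqb i 1 then b0 else tS (i-1)) (tS i)
                       (if Nat.leb i b then tH i else t0 + length c) true)
           (seq 1 a) ++
       map (fun j => mkBlock (tH j) Hon (h0+j)
                       (if Nat.eqb j 1 then b0
                        else if cbit j then tS (j-1) else tH (j-1))
                       (tH j) (tH j) false)
           (seq 1 b),
       (tS a, h0 + a)%nat)
  end.

Definition two_cycles (c1 : list miner) (bs1 : list bool) (c2 : list miner)
  (bs2 : list bool) : list block * list block :=
  let (B1, nb) := cycle_blocks 0 0 0 c1 bs1 in
  let (B2, _) := cycle_blocks (length c1) (fst nb) (snd nb) c2 bs2 in
  (B1, base_block :: B1 ++ B2).

Definition is_uncle (all : list block) (u : block) : bool :=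
  negb (boff u) && existsb (fun x => Nat.eqb (bid x) (bparent u) && boff x) all.

Definition knows (m : miner) (t : nat) (u : block) : bool :=
  Nat.ltb (bpub u) t ||
  (miner_eqb m Att && miner_eqb (bminer u) Att && Nat.ltb (bmined u) t).

Definition can_refer (n1 : nat) (u x : block) : bool :=
  boff x && Nat.ltb (bheight u) (bheight x) &&
  Nat.leb (bheight x - bheight u) n1 && knows (bminer x) (bmined x) u.

(* All miners refer all possible uncles: u is referred by the first (lowest)
   official block that can refer it; U_h counts those where it is honest. *)
Definition referred_by_honest (n1 : nat) (all : list block) (u : block) : bool :=
  existsb (fun x => can_refer n1 u x && miner_eqb (bminer x) Hon &&
             forallb (fun y => negb (can_refer n1 u y) || Nat.leb (bheight x) (bheight y)) all)
          all.

Definition Uh (n1 : nat) (c1 : list miner) (bs1 : list bool) (c2 : list miner)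
  (bs2 : list bool) : nat :=
  let (B1, all) := two_cycles c1 bs1 c2 bs2 in
  length (filter (fun u => is_uncle all u && referred_by_honest n1 all u) B1).

Fixpoint words (n : nat) : list (list miner) :=
  match n with O => [[]] | S n' => flat_map (fun w => [Att :: w; Hon :: w]) (words n') end.
Fixpoint bitlists (n : nat) : list (list bool) :=
  match n with O => [[]] | S n' => flat_map (fun w => [true :: w; false :: w]) (bitlists n') end.

Open Scope R_scope.

Definition sumR (l : list R) : R := fold_right Rplus 0 l.

(* N-th term: contribution of all (cycle, next cycle, bits) with total length N. *)
Definition Uh_term (p q g : R) (n1 : nat) (N : nat) : R :=
  sumR (map (fun k =>
    sumR (map (fun c1 =>
      sumR (map (fun c2 =>
        sumR (map (fun b1 =>
          sumR (map (fun b2 =>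
            cyc_prob p q c1 * bits_prob g b1 * cyc_prob p q c2 * bits_prob g b2
              * INR (Uh n1 c1 b1 c2 b2))
            (bitlists (nHon c2))))
          (bitlists (nHon c1))))
        (filter is_cycleb (words (N - k)))))
      (filter is_cycleb (words k))))
    (seq 0 (S N))).

(* Within the cycle c1, the only uncle referred by an honest block is the orphan at height 1
   of a cycle SHH.  In a cycle SSwH the attacker's fork wins; an honest uncle published before
   the attacker mines his last block is referred by the attacker, so only the uncles of the final
   run of honest blocks remain, and the first block of the next cycle c2 refers those within
   distance n1 when it is honest.  Hence U_h = inner(c1) + [c2 starts honest] * outer(c1) and
   the expectation factors over the two cycles.  Averaging outer over the parent bits leaves
   sums over Dyck paths w of weights depending on the final run of down steps of w.  By time
   reversal, the Dyck paths whose final run has length at least i have mass q^i/p, since the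
   paths from height i absorbed at 0 have mass 1/p (the bounded solution of a gambler's ruin
   recurrence); and the uncle of height 1 is referred only for the staircases S^k H^k, of mass
   (pq)^k.  Geometric sums give the formula. *)

From Stdlib Require Import Reals Lra Lia List Bool.
Import ListNotations.
Open Scope R_scope.

Lemma sumR_app l1 l2 : sumR (l1 ++ l2) = sumR l1 + sumR l2.
Proof. induction l1 as [|x l1 IH]; simpl; [|rewrite IH]; lra. Qed.

Lemma sumR_map_ext {A} (f g : A -> R) l :
  (forall x, In x l -> f x = g x) -> sumR (map f l) = sumR (map g l).
Proof. intros H; f_equal; apply map_ext_in; exact H. Qed.

Lemma sumR_map_eq0 {A} (f : A -> R) l :
  (forall x, In x l -> f x = 0) -> sumR (map f l) = 0.
Proof.
  induction l as [|x l IH]; simpl; intros H; [lra|].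
  rewrite H by tauto; rewrite IH by (intros; apply H; tauto); lra.
Qed.

Lemma sumR_map_add {A} (f g : A -> R) l :
  sumR (map (fun x => f x + g x) l) = sumR (map f l) + sumR (map g l).
Proof. induction l as [|x l IH]; simpl; [|rewrite IH]; lra. Qed.

Lemma sumR_map_scal {A} (a : R) (f : A -> R) l :
  sumR (map (fun x => a * f x) l) = a * sumR (map f l).
Proof. induction l as [|x l IH]; simpl; [|rewrite IH]; lra. Qed.

Lemma sumR_map_mul {A B} (f : A -> R) (g : B -> R) l1 l2 :
  sumR (map (fun x => sumR (map (fun y => f x * g y) l2)) l1)
  = sumR (map f l1) * sumR (map g l2).
Proof.
  induction l1 as [|x l1 IH]; simpl; [lra|].
  rewrite sumR_map_scal, IH; lra.
Qed.

Lemma sumR_nonneg l : (forall x, In x l -> 0 <= x) -> 0 <= sumR l.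
Proof.
  induction l as [|x l IH]; simpl; intros H; [lra|].
  pose proof (H x (or_introl eq_refl)); pose proof (IH (fun y Hy => H y (or_intror Hy))); lra.
Qed.

Lemma sumR_flat_map {A B} (f : B -> R) (g : A -> list B) l :
  sumR (map f (flat_map g l)) = sumR (map (fun x => sumR (map f (g x))) l).
Proof. induction l as [|x l IH]; simpl; [lra|]. rewrite map_app, sumR_app, IH; lra. Qed.

Lemma sumR_filter {A} (P : A -> bool) f l :
  sumR (map f (filter P l)) = sumR (map (fun x => if P x then f x else 0) l).
Proof. induction l as [|x l IH]; simpl; [lra|]. destruct (P x); simpl; rewrite IH; lra. Qed.

Lemma sumR_swap {A B} (f : A -> B -> R) l1 l2 :
  sumR (map (fun x => sumR (map (fun y => f x y) l2)) l1) =
  sumR (map (fun y => sumR (map (fun x => f x y) l1)) l2).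
Proof.
  induction l1 as [|x l1 IH]; simpl.
  - symmetry; apply sumR_map_eq0; intros; simpl; lra.
  - rewrite IH, <- sumR_map_add; reflexivity.
Qed.

Lemma sumR_seq_spike (f : nat -> R) j s K :
  sumR (map (fun k => if (k =? j)%nat then f k else 0) (seq s K)) =
  if ((s <=? j) && (j <? s + K))%nat then f j else 0.
Proof.
  revert s; induction K as [|K IH]; intros s.
  - simpl; destruct (Nat.leb_spec s j), (Nat.ltb_spec j (s + 0)); simpl; lia || lra.
  - change (seq s (S K)) with (s :: seq (S s) K); rewrite map_cons.
    change (sumR (?a :: ?l)) with (a + sumR l); rewrite IH.
    destruct (Nat.eqb_spec s j) as [<-|Hsj].
    + rewrite Nat.leb_refl.
      destruct (Nat.leb_spec (S s) s); [lia|].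
      destruct (Nat.ltb_spec s (s + S K)); [|lia]; simpl; lra.
    + destruct (Nat.leb_spec (S s) j), (Nat.leb_spec s j),
        (Nat.ltb_spec j (S s + K)), (Nat.ltb_spec j (s + S K)); simpl; lia || lra.
Qed.

Lemma sumR_geom x K : x <> 1 -> sumR (map (fun i => x ^ i) (seq 0 K)) = (1 - x ^ K) / (1 - x).
Proof.
  intros Hx; induction K as [|K IH].
  - simpl; field; lra.
  - rewrite seq_S, map_app, sumR_app, IH; simpl; field; lra.
Qed.

Lemma INR_length_filter {A} (P : A -> bool) l :
  INR (length (filter P l)) = sumR (map (fun x => if P x then 1 else 0) l).
Proof.
  induction l as [|x l IH]; simpl; [reflexivity|].
  destruct (P x); simpl length; rewrite ?S_INR, IH; simpl; ring.
Qed.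

Lemma length_filter_seq_gt L b : length (filter (fun j => L <? j)%nat (seq 1 b)) = (b - L)%nat.
Proof.
  induction b as [|b IH]; [reflexivity|].
  rewrite seq_S, filter_app, length_app, IH; cbn [filter].
  destruct (Nat.ltb_spec L (1 + b)); cbn [length]; lia.
Qed.

Lemma length_filter_seq_le T K : length (filter (fun i => i <=? T)%nat (seq 0 K)) = Nat.min (S T) K.
Proof.
  induction K as [|K IH]; [reflexivity|].
  rewrite seq_S, filter_app, length_app, IH; cbn [filter].
  destruct (Nat.leb_spec (0 + K) T); cbn [length]; lia.
Qed.

Lemma words_length n w : In w (words n) -> length w = n.
Proof.
  revert w; induction n as [|n IH]; simpl; intros w Hw.
  - destruct Hw as [<-|[]]; reflexivity.
  - apply in_flat_map in Hw as [w' [Hw' Hw]].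
    destruct Hw as [<-|[<-|[]]]; simpl; f_equal; auto.
Qed.

Lemma sumR_words_S (f : list miner -> R) n :
  sumR (map f (words (S n))) = sumR (map (fun w => f (Att :: w) + f (Hon :: w)) (words n)).
Proof. simpl; rewrite sumR_flat_map; apply sumR_map_ext; intros; simpl; lra. Qed.

Lemma sumR_words_S_rcons (f : list miner -> R) n :
  sumR (map f (words (S n))) = sumR (map (fun w => f (w ++ [Att]) + f (w ++ [Hon])) (words n)).
Proof.
  revert f; induction n as [|n IH]; intros f; [simpl; lra|].
  rewrite sumR_words_S, (IH (fun w => f (Att :: w) + f (Hon :: w))), sumR_words_S.
  apply sumR_map_ext; intros; simpl; lra.
Qed.

Definition flip (m : miner) : miner := match m with Att => Hon | Hon => Att end.

Definition mirror (w : list miner) : list miner := rev (map flip w).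

Lemma sumR_words_mirror (f : list miner -> R) n :
  sumR (map f (words n)) = sumR (map (fun w => f (mirror w)) (words n)).
Proof.
  revert f; induction n as [|n IH]; intros f; [reflexivity|].
  rewrite (sumR_words_S (fun w => f (mirror w))), sumR_words_S_rcons.
  rewrite (IH (fun w => f (w ++ [Att]) + f (w ++ [Hon]))).
  apply sumR_map_ext; intros; unfold mirror; simpl; lra.
Qed.

Lemma sumR_words_single (P : list miner -> bool) (f : list miner -> R) c0 :
  P c0 = true -> (forall w, length w = length c0 -> P w = true -> w = c0) ->
  sumR (map (fun w => if P w then f w else 0) (words (length c0))) = f c0.
Proof.
  revert P f; induction c0 as [|x c0 IH]; intros P f HP Hu; [simpl; rewrite HP; lra|].
  simpl length; rewrite sumR_words_S, sumR_map_add.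
  assert (Hother : forall y, y <> x ->
    sumR (map (fun w => if P (y :: w) then f (y :: w) else 0) (words (length c0))) = 0).
  { intros y Hy; apply sumR_map_eq0; intros w Hw.
    destruct (P (y :: w)) eqn:E; [|reflexivity].
    apply Hu in E; [congruence|simpl; f_equal; apply words_length; exact Hw]. }
  assert (Hx : sumR (map (fun w => if P (x :: w) then f (x :: w) else 0) (words (length c0)))
               = f (x :: c0)).
  { apply (IH (fun w => P (x :: w)) (fun w => f (x :: w))); [exact HP|].
    intros w Hw Pw; apply Hu in Pw; [congruence|simpl; congruence]. }
  destruct x; rewrite Hx, Hother by discriminate; lra.
Qed.

Lemma sumR_words_unique (P : list miner -> bool) (f : list miner -> R) c0 n :
  P c0 = true -> (forall w, P w = true -> w = c0) ->
  sumR (map (fun w => if P w then f w else 0) (words n)) = if (length c0 =? n)%nat then f c0 else 0.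
Proof.
  intros HP Hu; destruct (Nat.eqb_spec (length c0) n) as [<-|Hn].
  - apply sumR_words_single; auto.
  - apply sumR_map_eq0; intros w Hw.
    destruct (P w) eqn:E; [|reflexivity].
    apply Hu in E; subst w; apply words_length in Hw; contradiction.
Qed.

Fixpoint leadA (w : list miner) : nat := match w with Att :: w' => S (leadA w') | _ => O end.

Lemma sumR_words_leadA (f : list miner -> R) i n :
  sumR (map (fun w => if (i <=? leadA w)%nat then f w else 0) (words n)) =
  if (i <=? n)%nat then sumR (map (fun v => f (repeat Att i ++ v)) (words (n - i))) else 0.
Proof.
  revert f n; induction i as [|i IH]; intros f n.
  - rewrite Nat.sub_0_r; reflexivity.
  - destruct n as [|n]; [simpl; lra|].
    rewrite sumR_words_S, sumR_map_add; simpl leadA; simpl Nat.leb.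
    rewrite (IH (fun w => f (Att :: w)) n), (sumR_map_eq0 (fun _ => 0)) by reflexivity.
    simpl; lra.
Qed.

Lemma miner_eqb_eq x y : miner_eqb x y = true <-> x = y.
Proof. destruct x, y; simpl; split; congruence. Qed.

Definition step (k : nat) (x : miner) : option nat :=
  match x with Att => Some (S k) | Hon => match k with O => None | S k' => Some k' end end.

Fixpoint walk (k : nat) (w : list miner) : option nat :=
  match w with
  | [] => Some k
  | x :: w' => match step k x with None => None | Some k' => walk k' w' end
  end.

Lemma dyck_aux_walk k w : dyck_aux k w = match walk k w with Some 0%nat => true | _ => false end.
Proof.
  revert k; induction w as [|x w IH]; intros k; simpl; [now destruct k|].
  destruct x; simpl; [apply IH|]. destruct k; [reflexivity|apply IH].
Qed.

Lemma walk_app k u v :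
  walk k (u ++ v) = match walk k u with None => None | Some k' => walk k' v end.
Proof. revert k; induction u as [|x u IH]; intros k; simpl; [|destruct (step k x)]; auto. Qed.

Lemma step_flip k x k' : step k x = Some k' <-> step k' (flip x) = Some k.
Proof. destruct x, k, k'; simpl; split; intros; congruence. Qed.

Lemma walk_mirror w : forall k e, walk k w = Some e <-> walk e (mirror w) = Some k.
Proof.
  induction w as [|x w IH]; intros k e; unfold mirror in *; simpl; [split; intros; congruence|].
  rewrite walk_app; split.
  - destruct (step k x) as [k'|] eqn:Es; [|discriminate].
    intros Hw; apply IH in Hw; rewrite Hw; simpl.
    apply step_flip in Es; rewrite Es; reflexivity.
  - destruct (walk e (rev (map flip w))) as [k'|] eqn:Ew; [|discriminate]; simpl.
    destruct (step k' (flip x)) as [k''|] eqn:Es; [|discriminate].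
    intros E; injection E as ->.
    apply step_flip in Es; rewrite Es; apply IH; exact Ew.
Qed.

Lemma is_dyck_mirror w : is_dyck (mirror w) = is_dyck w.
Proof.
  unfold is_dyck; rewrite !dyck_aux_walk.
  destruct (walk 0 w) as [[|n]|] eqn:E.
  - apply walk_mirror in E; rewrite E; reflexivity.
  - destruct (walk 0 (mirror w)) as [[|m]|] eqn:E'; auto.
    apply (walk_mirror w 0 0) in E'; congruence.
  - destruct (walk 0 (mirror w)) as [[|m]|] eqn:E'; auto.
    apply (walk_mirror w 0 0) in E'; congruence.
Qed.

Lemma dyck_aux_repeat_Att k i v : dyck_aux k (repeat Att i ++ v) = dyck_aux (k + i) v.
Proof.
  revert k; induction i as [|i IH]; intros k; simpl; [now rewrite Nat.add_0_r|].
  rewrite IH; f_equal; lia.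
Qed.

Lemma dyck_aux_repeat_Hon k t : dyck_aux k (repeat Hon t) = (k =? t)%nat.
Proof. revert k; induction t as [|t IH]; intros [|k]; simpl; auto. Qed.

Definition cnt (m : miner) (w : list miner) : nat := length (filter (fun x => miner_eqb x m) w).

Lemma cnt_cons m x w : cnt m (x :: w) = ((if miner_eqb x m then 1 else 0) + cnt m w)%nat.
Proof. unfold cnt; simpl; destruct (miner_eqb x m); reflexivity. Qed.

Lemma cnt_app m u v : cnt m (u ++ v) = (cnt m u + cnt m v)%nat.
Proof. unfold cnt; rewrite filter_app, length_app; reflexivity. Qed.

Lemma cnt_repeat m m' t : cnt m (repeat m' t) = if miner_eqb m' m then t else 0%nat.
Proof.
  induction t as [|t IH]; simpl; [now destruct (miner_eqb m' m)|].
  rewrite cnt_cons, IH; destruct (miner_eqb m' m); lia.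
Qed.

Lemma cnt_rev m w : cnt m (rev w) = cnt m w.
Proof.
  induction w as [|x w IH]; simpl; [reflexivity|].
  rewrite cnt_app, IH; unfold cnt; simpl; destruct (miner_eqb x m); simpl; lia.
Qed.

Lemma length_cnt w : length w = (cnt Att w + cnt Hon w)%nat.
Proof. induction w as [|x w IH]; [reflexivity|]. rewrite !cnt_cons; destruct x; simpl; lia. Qed.

Lemma walk_cnt w : forall k e, walk k w = Some e -> (k + cnt Att w = e + cnt Hon w)%nat.
Proof.
  induction w as [|x w IH]; intros k e H; simpl in H.
  - injection H as ->; reflexivity.
  - rewrite !cnt_cons; destruct x; simpl in H; [apply IH in H; simpl; lia|].
    destruct k; [discriminate|]. apply IH in H; simpl; lia.
Qed.

Lemma dyck_cnt w : is_dyck w = true -> cnt Att w = cnt Hon w.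
Proof.
  unfold is_dyck; rewrite dyck_aux_walk.
  destruct (walk 0 w) as [[|n]|] eqn:E; try discriminate.
  intros _; apply walk_cnt in E; lia.
Qed.

Lemma cyc_prob_cnt p q w : cyc_prob p q w = q ^ cnt Att w * p ^ cnt Hon w.
Proof.
  induction w as [|x w IH]; [simpl; ring|].
  simpl cyc_prob; rewrite IH, !cnt_cons; destruct x; simpl; ring.
Qed.

Lemma cyc_prob_app p q u v : cyc_prob p q (u ++ v) = cyc_prob p q u * cyc_prob p q v.
Proof. induction u as [|x u IH]; simpl; [|rewrite IH]; ring. Qed.

Lemma cyc_prob_repeat_Att p q i : cyc_prob p q (repeat Att i) = q ^ i.
Proof. induction i as [|i IH]; simpl; [|rewrite IH]; reflexivity. Qed.

Lemma cyc_prob_nonneg p q w : 0 <= p -> 0 <= q -> 0 <= cyc_prob p q w.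
Proof.
  intros Hp Hq; induction w as [|x w IH]; simpl; [lra|].
  destruct x; apply Rmult_le_pos; auto.
Qed.

Lemma cnt_mirror m w : cnt m (mirror w) = cnt (flip m) w.
Proof.
  unfold mirror; rewrite cnt_rev.
  induction w as [|x w IH]; [reflexivity|].
  simpl map; rewrite !cnt_cons, IH; destruct x, m; reflexivity.
Qed.

Lemma cyc_prob_mirror_dyck p q w : is_dyck w = true -> cyc_prob p q (mirror w) = cyc_prob p q w.
Proof.
  intros Hw; rewrite !cyc_prob_cnt, !cnt_mirror; simpl flip; rewrite (dyck_cnt w Hw); ring.
Qed.

Fixpoint leadH (w : list miner) : nat := match w with Hon :: w' => S (leadH w') | _ => O end.

Definition trail (w : list miner) : nat := leadH (rev w).

Lemma trail_mirror w : trail (mirror w) = leadA w.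
Proof.
  unfold trail, mirror; rewrite rev_involutive.
  induction w as [|x w IH]; [reflexivity|]. destruct x; simpl; auto.
Qed.

(** * The mass of Dyck paths *)

Lemma Un_cv_const c : Un_cv (fun _ => c) c.
Proof. intros eps He; exists 0%nat; intros; unfold Rdist; rewrite Rminus_diag, Rabs_R0; lra. Qed.

Lemma Un_cv_unique_shift u v l l' :
  Un_cv u l -> Un_cv v l' -> (forall N, u (S N) = v N) -> l = l'.
Proof.
  intros Hu Hv Huv; apply (UL_sequence v); [|exact Hv].
  apply (Un_cv_ext (fun N => u (N + 1)%nat)); [intros N; rewrite Nat.add_1_r; apply Huv|].
  apply CV_shift'; exact Hu.
Qed.

(* The increments of a solution grow geometrically with ratio p/q > 1. *)
Lemma bounded_recurrence_const (p q M : R) (L : nat -> R) :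
  0 < q -> q < p -> p + q = 1 -> (forall k, 0 <= L k <= M) ->
  (forall k, L (S k) = q * L (S (S k)) + p * L k) -> forall k, L k = L 0%nat.
Proof.
  intros Hq Hqp Hpq HM HL.
  assert (Hstep : forall k, p * (L k - L (S k)) = q * (L (S k) - L (S (S k)))).
  { intros k; rewrite (HL k); replace q with (1 - p) by lra; ring. }
  assert (Hd : forall k, L 0%nat - L 1%nat = (q / p) ^ k * (L k - L (S k))).
  { induction k as [|k IH]; [simpl; ring|].
    rewrite IH; simpl.
    replace (L k - L (S k)) with (q * (L (S k) - L (S (S k))) / p)
      by (rewrite <- Hstep; field; lra).
    field; lra. }
  assert (Hd0 : L 0%nat - L 1%nat = 0).
  { apply cond_eq; intros eps He; unfold Rdist; rewrite Rminus_0_r.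
    assert (Hr : Rabs (q / p) < 1).
    { rewrite Rabs_right by (apply Rle_ge, Rlt_le, Rdiv_lt_0_compat; lra).
      apply (Rmult_lt_reg_r p); [lra|]. field_simplify; lra. }
    assert (HM0 : 0 <= M) by (destruct (HM 0%nat); lra).
    destruct (pow_lt_1_zero (q / p) Hr (eps / (M + 1))) as [N HN];
      [apply Rdiv_lt_0_compat; lra|].
    specialize (HN N (le_n N)).
    rewrite (Hd N), Rabs_mult.
    assert (Rabs (L N - L (S N)) <= M) by (destruct (HM N), (HM (S N)); apply Rabs_le; lra).
    apply (Rle_lt_trans _ (Rabs ((q / p) ^ N) * M));
      [apply Rmult_le_compat_l; [apply Rabs_pos|assumption]|].
    apply (Rle_lt_trans _ (eps / (M + 1) * M)); [apply Rmult_le_compat_r; lra|].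
    apply (Rmult_lt_reg_r (M + 1)); [lra|]. field_simplify; nra. }
  assert (Hflat : forall k, L k - L (S k) = 0).
  { intros k; specialize (Hd k); rewrite Hd0 in Hd.
    assert ((q / p) ^ k <> 0) by (apply pow_nonzero; apply Rgt_not_eq, Rdiv_lt_0_compat; lra).
    apply (Rmult_eq_reg_l ((q / p) ^ k)); lra. }
  induction k as [|k IH]; [reflexivity|]. specialize (Hflat k); lra.
Qed.

Definition dyck_mass (p q : R) (n k : nat) : R :=
  sumR (map (fun w => if dyck_aux k w then cyc_prob p q w else 0) (words n)).

Section DyckMass.

Variables p q : R.
Hypotheses (Hq : 0 < q) (Hqp : q < p) (Hpq : p + q = 1).

Lemma dyck_mass_0 k : dyck_mass p q 0 k = if (k =? 0)%nat then 1 else 0.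
Proof. unfold dyck_mass; simpl; destruct k; simpl; lra. Qed.

Lemma dyck_mass_S0 n : dyck_mass p q (S n) 0 = q * dyck_mass p q n 1.
Proof.
  unfold dyck_mass; rewrite sumR_words_S, <- sumR_map_scal.
  apply sumR_map_ext; intros w _; simpl; destruct (dyck_aux 1 w); lra.
Qed.

Lemma dyck_mass_SS n k :
  dyck_mass p q (S n) (S k) = q * dyck_mass p q n (S (S k)) + p * dyck_mass p q n k.
Proof.
  unfold dyck_mass; rewrite sumR_words_S, <- !sumR_map_scal, <- sumR_map_add.
  apply sumR_map_ext; intros w _; simpl.
  destruct (dyck_aux (S (S k)) w), (dyck_aux k w); lra.
Qed.

Lemma dyck_mass_nonneg n k : 0 <= dyck_mass p q n k.
Proof.
  apply sumR_nonneg; intros x Hx; apply in_map_iff in Hx as [w [<- _]].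
  destruct (dyck_aux k w); [apply cyc_prob_nonneg|]; lra.
Qed.

Let dyck_partial N k := sum_f_R0 (fun n => dyck_mass p q n k) N.

Lemma dyck_partial_S0 N : dyck_partial (S N) 0 = 1 + q * dyck_partial N 1.
Proof.
  unfold dyck_partial; rewrite decomp_sum by lia; simpl pred.
  rewrite dyck_mass_0, scal_sum; simpl Nat.eqb; f_equal.
  apply sum_eq; intros; rewrite dyck_mass_S0; lra.
Qed.

Lemma dyck_partial_SS N k :
  dyck_partial (S N) (S k) = q * dyck_partial N (S (S k)) + p * dyck_partial N k.
Proof.
  unfold dyck_partial; rewrite decomp_sum by lia; simpl pred.
  rewrite dyck_mass_0, !scal_sum, <- sum_plus; simpl Nat.eqb; rewrite Rplus_0_l.
  apply sum_eq; intros; rewrite dyck_mass_SS; lra.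
Qed.

Lemma dyck_partial_bound N k : 0 <= dyck_partial N k <= 1 / p.
Proof.
  assert (Hinv : 1 / p = 1 + q * (1 / p)) by (replace q with (1 - p) by lra; field; lra).
  assert (Hqinv : 0 <= q * (1 / p)) by (apply Rmult_le_pos; [|apply Rlt_le, Rdiv_lt_0_compat]; lra).
  revert k; induction N as [|N IH]; intros k.
  - unfold dyck_partial; simpl; rewrite dyck_mass_0; destruct (k =? 0)%nat; lra.
  - destruct k as [|k].
    + rewrite dyck_partial_S0; destruct (IH 1%nat).
      assert (q * dyck_partial N 1 <= q * (1 / p)) by (apply Rmult_le_compat_l; lra).
      split; nra.
    + rewrite dyck_partial_SS; destruct (IH (S (S k))), (IH k).
      assert (q * dyck_partial N (S (S k)) <= q * (1 / p)) by (apply Rmult_le_compat_l; lra).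
      assert (p * dyck_partial N k <= p * (1 / p)) by (apply Rmult_le_compat_l; lra).
      assert (p * (1 / p) = 1) by (field; lra).
      split; nra.
Qed.

(* A path from height k is absorbed at 0 with probability 1 and then returns to 0
   a geometric number of times, of mean 1/p. *)
Lemma dyck_mass_series k : infinite_sum (fun n => dyck_mass p q n k) (1 / p).
Proof.
  assert (Hcv : forall k, {l | Un_cv (fun N => dyck_partial N k) l}).
  { intros k'; apply growing_cv.
    - intros N; unfold dyck_partial; simpl; pose proof (dyck_mass_nonneg (S N) k'); lra.
    - exists (1 / p); intros x [N ->]; apply dyck_partial_bound. }
  set (L k := proj1_sig (Hcv k)).
  assert (HL : forall k, Un_cv (fun N => dyck_partial N k) (L k)) by (intros; apply proj2_sig).
  assert (HLb : forall k, 0 <= L k <= 1 / p).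
  { intros k'; split.
    - exact (Rle_cv_lim (fun N => proj1 (dyck_partial_bound N k')) (Un_cv_const 0) (HL k')).
    - exact (Rle_cv_lim (fun N => proj2 (dyck_partial_bound N k')) (HL k') (Un_cv_const _)). }
  assert (HL0 : L 0%nat = 1 + q * L 1%nat).
  { apply (Un_cv_unique_shift _ (fun N => 1 + q * dyck_partial N 1) _ _ (HL 0%nat));
      [apply CV_plus, CV_mult; auto using Un_cv_const|apply dyck_partial_S0]. }
  assert (HLS : forall k, L (S k) = q * L (S (S k)) + p * L k).
  { intros k'.
    apply (Un_cv_unique_shift _ (fun N => q * dyck_partial N (S (S k')) + p * dyck_partial N k')
             _ _ (HL (S k')));
      [apply CV_plus; apply CV_mult; auto using Un_cv_const|intros N; apply dyck_partial_SS]. }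
  pose proof (bounded_recurrence_const p q (1 / p) L Hq Hqp Hpq HLb HLS) as Hconst.
  assert (Hval : L 0%nat = 1 / p).
  { rewrite (Hconst 1%nat) in HL0.
    assert (HpL : p * L 0%nat = 1)
      by (replace p with (1 - q) by lra; rewrite Rmult_minus_distr_r; lra).
    apply (Rmult_eq_reg_l p); [rewrite HpL; field|]; lra. }
  unfold infinite_sum; rewrite <- Hval, <- (Hconst k); apply HL.
Qed.

End DyckMass.

Lemma leadH_app_Att v z : leadH (v ++ Att :: z) = leadH v.
Proof. induction v as [|x v IH]; [reflexivity|]. destruct x; simpl; auto. Qed.

Lemma trail_rcons_Hon v : trail (v ++ [Hon]) = S (trail v).
Proof. unfold trail; rewrite rev_app_distr; reflexivity. Qed.

Lemma trail_app_Att u t : trail (u ++ Att :: repeat Hon t) = t.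
Proof.
  unfold trail; rewrite rev_app_distr; simpl; rewrite rev_repeat, <- app_assoc.
  induction t as [|t IH]; simpl; auto.
Qed.

Lemma trail_SS w : trail (Att :: Att :: w ++ [Hon]) = S (trail w).
Proof.
  rewrite app_comm_cons, app_comm_cons, trail_rcons_Hon; f_equal.
  unfold trail; simpl; rewrite <- !app_assoc; apply leadH_app_Att.
Qed.

Lemma trail_le_cnt w : (trail w <= cnt Hon w)%nat.
Proof.
  unfold trail; rewrite <- (cnt_rev Hon w).
  induction (rev w) as [|x v IH]; [simpl; lia|]. rewrite cnt_cons; destruct x; simpl; lia.
Qed.

Lemma trail_decomp c : (1 <= cnt Att c)%nat -> exists u, c = u ++ Att :: repeat Hon (trail c).
Proof.
  assert (Hrev : forall v, (1 <= cnt Att v)%nat ->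
                   exists u, rev v = u ++ Att :: repeat Hon (leadH v)).
  { induction v as [|x v IH]; intros H; [unfold cnt in H; simpl in H; lia|].
    destruct x; simpl.
    - exists (rev v); reflexivity.
    - rewrite cnt_cons in H; destruct IH as [u Hu]; [simpl in H; lia|].
      exists u; rewrite Hu, <- app_assoc; simpl; rewrite repeat_cons; reflexivity. }
  intros H; destruct (Hrev (rev c)) as [u Hu]; [rewrite cnt_rev; exact H|].
  exists u; rewrite rev_involutive in Hu; exact Hu.
Qed.

Lemma occ_pos_bounds m w k : (1 <= k <= cnt m w)%nat -> (1 <= occ_pos m w k <= length w)%nat.
Proof.
  revert k; induction w as [|x w IH]; intros k Hk; [unfold cnt in Hk; simpl in Hk; lia|].
  rewrite cnt_cons in Hk; simpl.
  destruct (miner_eqb x m); [destruct (Nat.eqb_spec k 1); [lia|]; specialize (IH (k - 1)%nat)|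
    specialize (IH k)]; lia.
Qed.

Lemma occ_pos_cons_pos m x w k : (1 <= occ_pos m (x :: w) k)%nat.
Proof. simpl; destruct (miner_eqb x m); [destruct (k =? 1)%nat|]; lia. Qed.

Lemma occ_pos_app_l m u v k : (1 <= k <= cnt m u)%nat -> occ_pos m (u ++ v) k = occ_pos m u k.
Proof.
  revert k; induction u as [|x u IH]; intros k Hk; [unfold cnt in Hk; simpl in Hk; lia|].
  rewrite cnt_cons in Hk; simpl.
  destruct (miner_eqb x m); [destruct (Nat.eqb_spec k 1); [reflexivity|]|];
    rewrite IH by lia; reflexivity.
Qed.

Lemma occ_pos_app_r m u v k : (cnt m u < k)%nat ->
  occ_pos m (u ++ v) k = (length u + occ_pos m v (k - cnt m u))%nat.
Proof.
  revert k; induction u as [|x u IH]; intros k Hk; [simpl; rewrite Nat.sub_0_r; reflexivity|].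
  rewrite cnt_cons in Hk; simpl; rewrite cnt_cons.
  destruct (miner_eqb x m).
  - destruct (Nat.eqb_spec k 1); [lia|]. rewrite IH by lia. do 3 f_equal; lia.
  - rewrite IH by lia; reflexivity.
Qed.

Lemma nth_occ_pos m w k : (1 <= k <= cnt m w)%nat -> nth (pred (occ_pos m w k)) w Att = m.
Proof.
  revert k; induction w as [|x w IH]; intros k Hk; [unfold cnt in Hk; simpl in Hk; lia|].
  rewrite cnt_cons in Hk; simpl.
  destruct (miner_eqb x m) eqn:E.
  - apply miner_eqb_eq in E. destruct (Nat.eqb_spec k 1); [exact E|].
    pose proof (occ_pos_bounds m w (k - 1) ltac:(lia)).
    specialize (IH (k - 1)%nat ltac:(lia)).
    destruct (occ_pos m w (k - 1)); [lia|exact IH].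
  - pose proof (occ_pos_bounds m w k ltac:(lia)).
    specialize (IH k ltac:(lia)).
    destruct (occ_pos m w k); [lia|exact IH].
Qed.

Lemma occ_pos_Att_Hon w i j : (1 <= i <= cnt Att w)%nat -> (1 <= j <= cnt Hon w)%nat ->
  occ_pos Att w i <> occ_pos Hon w j.
Proof.
  intros Hi Hj E; pose proof (nth_occ_pos Att w i Hi) as HA; pose proof (nth_occ_pos Hon w j Hj).
  rewrite E in HA; congruence.
Qed.

Lemma cnt_Att_app_Att u t : cnt Att (u ++ Att :: repeat Hon t) = S (cnt Att u).
Proof. rewrite cnt_app, cnt_cons, cnt_repeat; simpl; lia. Qed.

Lemma cnt_Hon_app_Att u t : cnt Hon (u ++ Att :: repeat Hon t) = (cnt Hon u + t)%nat.
Proof. rewrite cnt_app, cnt_cons, cnt_repeat; simpl; lia. Qed.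

Lemma occ_pos_Att_app_Att u t i : (1 <= i <= S (cnt Att u))%nat ->
  (occ_pos Att (u ++ Att :: repeat Hon t) i <= length u + 1)%nat.
Proof.
  intros Hi; destruct (Nat.le_gt_cases i (cnt Att u)).
  - rewrite occ_pos_app_l by lia; pose proof (occ_pos_bounds Att u i); lia.
  - rewrite occ_pos_app_r by lia; replace (i - cnt Att u)%nat with 1%nat by lia; simpl; lia.
Qed.

Lemma occ_pos_Att_app_Att_last u t :
  occ_pos Att (u ++ Att :: repeat Hon t) (S (cnt Att u)) = (length u + 1)%nat.
Proof.
  rewrite occ_pos_app_r by lia.
  replace (S (cnt Att u) - cnt Att u)%nat with 1%nat by lia; simpl; lia.
Qed.

Lemma occ_pos_Hon_app_Att_early u t j : (1 <= j <= cnt Hon u)%nat ->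
  (occ_pos Hon (u ++ Att :: repeat Hon t) j <= length u)%nat.
Proof. intros Hj; rewrite occ_pos_app_l by lia; apply occ_pos_bounds; lia. Qed.

Lemma occ_pos_Hon_app_Att_late u t j : (1 <= t)%nat -> (cnt Hon u < j)%nat ->
  (length u + 2 <= occ_pos Hon (u ++ Att :: repeat Hon t) j)%nat.
Proof.
  intros Ht Hj; rewrite occ_pos_app_r by lia; simpl.
  destruct t as [|t]; [lia|]; simpl; destruct (j - cnt Hon u =? 1)%nat; lia.
Qed.

(** * Uncles referred by honest miners *)

Lemma is_cycleb_cases c : is_cycleb c = true ->
  c = [Hon] \/ c = [Att; Hon; Att] \/ c = [Att; Hon; Hon] \/
  exists w, c = Att :: Att :: w ++ [Hon] /\ is_dyck w = true.
Proof.
  intros H; destruct c as [|[] c]; try discriminate.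
  - destruct c as [|[] c]; try discriminate.
    + do 3 right; destruct c as [|z r]; [discriminate|].
      change (miner_eqb (last (z :: r) Att) Hon && is_dyck (removelast (z :: r)) = true) in H.
      apply andb_prop in H as [Hl Hd]; apply miner_eqb_eq in Hl.
      exists (removelast (z :: r)); split; [|exact Hd].
      rewrite <- Hl; do 2 f_equal; apply app_removelast_last; discriminate.
    + destruct c as [|[] [|]]; try discriminate; auto.
  - destruct c; [auto|discriminate].
Qed.

Lemma is_cycleb_SS w x : is_cycleb (Att :: Att :: w ++ [x]) = miner_eqb x Hon && is_dyck w.
Proof.
  assert (Hr : forall r, r <> [] ->
    is_cycleb (Att :: Att :: r) = miner_eqb (last r Att) Hon && is_dyck (removelast r))
    by (intros [|y r] Hr; [congruence|reflexivity]).
  rewrite Hr by (destruct w; discriminate); rewrite last_last, removelast_last; reflexivity.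
Qed.

Definition att_block (t0 b0 h0 : nat) (c : list miner) (i : nat) : block :=
  mkBlock (t0 + occ_pos Att c i) Att (h0 + i)
    (if Nat.eqb i 1 then b0 else t0 + occ_pos Att c (i - 1))
    (t0 + occ_pos Att c i)
    (if Nat.leb i (nHon c) then t0 + occ_pos Hon c i else t0 + length c) true.

Definition hon_block (t0 b0 h0 : nat) (c : list miner) (bs : list bool) (j : nat) : block :=
  mkBlock (t0 + occ_pos Hon c j) Hon (h0 + j)
    (if Nat.eqb j 1 then b0
     else if nth (j - 1) bs false then t0 + occ_pos Att c (j - 1) else t0 + occ_pos Hon c (j - 1))
    (t0 + occ_pos Hon c j) (t0 + occ_pos Hon c j) false.

Lemma cycle_blocks_SS t0 b0 h0 c bs r : c = Att :: Att :: r ->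
  cycle_blocks t0 b0 h0 c bs =
  (map (att_block t0 b0 h0 c) (seq 1 (cnt Att c)) ++
     map (hon_block t0 b0 h0 c bs) (seq 1 (cnt Hon c)),
   (t0 + occ_pos Att c (cnt Att c), h0 + cnt Att c))%nat.
Proof.
  intros ->; change (nHon (Att :: Att :: r)) with (cnt Hon (Att :: Att :: r)).
  set (c := Att :: Att :: r).
  replace (cnt Att c) with (length c - cnt Hon c)%nat by (rewrite (length_cnt c); lia).
  reflexivity.
Qed.

Definition starts_honest (c : list miner) (bs : list bool) : bool :=
  match c with [Hon] => true | [Att; Hon; Hon] => negb (nth 1 bs false) | _ => false end.

(* The properties of the next cycle's blocks on which the referral of the uncles of a cycle
   ending at time t0 and height h0 depends. *)
Definition next_cycle_spec (t0 h0 : nat) (hon : bool) (B : list block) : Prop :=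
  (forall x, In x B -> t0 < bid x /\ t0 < bmined x /\ h0 < bheight x)%nat /\
  exists z, In z B /\ boff z = true /\ bheight z = S h0 /\
    forall x, In x B -> boff x = true -> bheight x = S h0 -> (bminer x = Hon <-> hon = true).

Lemma cycle_blocks_spec t0 b0 h0 c bs : is_cycleb c = true ->
  next_cycle_spec t0 h0 (starts_honest c bs) (fst (cycle_blocks t0 b0 h0 c bs)).
Proof.
  intros Hc; apply is_cycleb_cases in Hc as [->|[->|[->|[w [-> _]]]]].
  1-3: split; [intros x Hx; simpl in Hx; repeat destruct Hx as [<-|Hx]; simpl; lia|].
  1-2: eexists; split; [left; reflexivity|].
  3: simpl; destruct (nth 1 bs false); eexists; split;
       [left; reflexivity|..|right; left; reflexivity|].
  1-4: split; [reflexivity|]; split; [simpl; lia|];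
    intros x Hx Hoff Hh; simpl in Hx; repeat destruct Hx as [<-|Hx];
    simpl in *; try contradiction; try discriminate; try lia; split; intros; congruence.
  - rewrite (cycle_blocks_SS _ _ _ _ _ (w ++ [Hon]) eq_refl); cbn [fst].
    set (c := Att :: Att :: w ++ [Hon]).
    assert (Ha : (1 <= cnt Att c)%nat) by (unfold c; rewrite cnt_cons; simpl; lia).
    split.
    + intros x Hx; apply in_app_iff in Hx as [Hx|Hx]; apply in_map_iff in Hx as [i [<- Hi]];
        apply in_seq in Hi; cbn [att_block hon_block bid bmined bheight];
        pose proof (occ_pos_cons_pos Att Att (Att :: w ++ [Hon]) i : 1 <= occ_pos Att c i)%nat;
        pose proof (occ_pos_cons_pos Hon Att (Att :: w ++ [Hon]) i : 1 <= occ_pos Hon c i)%nat; lia.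
    + exists (att_block t0 b0 h0 c 1); split; [|split; [reflexivity|split; [simpl; lia|]]].
      * apply in_app_iff; left; apply in_map, in_seq; lia.
      * intros x Hx Hoff _; apply in_app_iff in Hx as [Hx|Hx]; apply in_map_iff in Hx as [i [<- _]].
        -- simpl; split; discriminate.
        -- discriminate Hoff.
Qed.

Lemma can_refer_Hon n1 u x : bminer u = Hon ->
  can_refer n1 u x = true <->
  (boff x = true /\ bheight u < bheight x /\ bheight x - bheight u <= n1 /\ bpub u < bmined x)%nat.
Proof.
  intros Hu; unfold can_refer, knows; rewrite Hu.
  destruct (miner_eqb (bminer x) Att); simpl;
    rewrite ?orb_false_r, !andb_true_iff, !Nat.ltb_lt, !Nat.leb_le; tauto.
Qed.

Lemma referred_by_honest_iff n1 all u :
  referred_by_honest n1 all u = true <->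
  exists x, In x all /\ can_refer n1 u x = true /\ bminer x = Hon /\
    forall y, In y all -> can_refer n1 u y = true -> (bheight x <= bheight y)%nat.
Proof.
  unfold referred_by_honest; rewrite existsb_exists; split.
  - intros [x [Hx H]]; apply andb_prop in H as [H Hmin]; apply andb_prop in H as [Hr Hm].
    exists x; repeat split; auto; [apply miner_eqb_eq; exact Hm|].
    intros y Hy Hry; rewrite forallb_forall in Hmin; specialize (Hmin y Hy).
    rewrite Hry in Hmin; apply Nat.leb_le; exact Hmin.
  - intros [x [Hx [Hr [Hm Hmin]]]]; exists x; split; [exact Hx|].
    rewrite Hr, Hm; simpl; apply forallb_forall; intros y Hy.
    destruct (can_refer n1 u y) eqn:E; [apply Nat.leb_le; auto|reflexivity].
Qed.

Lemma referred_by_honest_lowest n1 all u z :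
  In z all -> can_refer n1 u z = true ->
  (forall y, In y all -> can_refer n1 u y = true ->
     (bheight z <= bheight y)%nat /\ (bheight y = bheight z -> bminer y = bminer z)) ->
  referred_by_honest n1 all u = miner_eqb (bminer z) Hon.
Proof.
  intros Hz Hrz Hlow; destruct (miner_eqb (bminer z) Hon) eqn:Em.
  - apply referred_by_honest_iff; exists z; repeat split; auto.
    + apply miner_eqb_eq; exact Em.
    + intros y Hy Hry; apply Hlow; auto.
  - apply not_true_is_false; rewrite referred_by_honest_iff.
    intros [x [Hx [Hrx [Hmx Hmin]]]].
    specialize (Hmin z Hz Hrz); destruct (Hlow x Hx Hrx) as [Hle Heq].
    rewrite Heq in Hmx by lia; rewrite Hmx in Em; discriminate.
Qed.

Definition honest_refs (n1 : nat) (all B : list block) : nat :=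
  length (filter (fun u => is_uncle all u && referred_by_honest n1 all u) B).

Lemma Uh_honest_refs n1 c1 bs1 c2 bs2 :
  Uh n1 c1 bs1 c2 bs2 =
  honest_refs n1
    (base_block :: fst (cycle_blocks 0 0 0 c1 bs1) ++
       fst (cycle_blocks (length c1) (fst (snd (cycle_blocks 0 0 0 c1 bs1)))
              (snd (snd (cycle_blocks 0 0 0 c1 bs1))) c2 bs2))
    (fst (cycle_blocks 0 0 0 c1 bs1)).
Proof.
  unfold Uh, two_cycles; destruct (cycle_blocks 0 0 0 c1 bs1) as [B1 [b h]]; simpl.
  destruct (cycle_blocks (length c1) b h c2 bs2); reflexivity.
Qed.

(* Within a cycle, only SHH has an uncle referred by an honest block: the orphan at height 1. *)
Definition inner_refs (c : list miner) : nat := match c with [Att; Hon; Hon] => 1 | _ => 0 end.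

(* In a cycle SSwH the attacker's fork wins.  Its honest block of height j is an uncle when
   j = 1 or the block was mined on the attacker's branch; the first block of the next cycle
   refers it when that block is honest, j lies in the final run of honest blocks (the earlier
   ones are referred by the attacker) and the distance nHon c + 2 - j is at most n1. *)
Definition outer_refs (n1 : nat) (c : list miner) (bs : list bool) : nat :=
  match c with
  | Att :: Att :: _ =>
      length (filter (fun j => ((nHon c - trail c <? j) && (nHon c + 2 <=? j + n1))%nat
                               && ((j =? 1)%nat || nth (j - 1) bs false))
                (seq 1 (nHon c)))
  | _ => 0
  end.

Section AttackerWins.

Variables (n1 : nat) (u : list miner) (t : nat) (bs : list bool) (hon : bool) (B2 : list block).

Let c := u ++ Att :: repeat Hon t.

Hypotheses (Ht : (1 <= t)%nat) (Hab : cnt Att c = S (cnt Hon c))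
  (HB2 : next_cycle_spec (length c) (cnt Att c) hon B2).

Let B1 :=
  map (att_block 0 0 0 c) (seq 1 (cnt Att c)) ++ map (hon_block 0 0 0 c bs) (seq 1 (cnt Hon c)).
Let all := base_block :: B1 ++ B2.

Lemma in_all_blocks x : In x all ->
  x = base_block \/
  (exists i, (1 <= i <= cnt Att c)%nat /\ x = att_block 0 0 0 c i) \/
  (exists j, (1 <= j <= cnt Hon c)%nat /\ x = hon_block 0 0 0 c bs j) \/ In x B2.
Proof.
  intros [<-|Hx]; [now left|]; apply in_app_iff in Hx as [Hx|Hx]; [|tauto].
  apply in_app_iff in Hx as [Hx|Hx]; apply in_map_iff in Hx as [i [<- Hi]]; apply in_seq in Hi.
  - right; left; exists i; split; [lia|reflexivity].
  - right; right; left; exists i; split; [lia|reflexivity].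
Qed.

Lemma att_block_in_all i : (1 <= i <= cnt Att c)%nat -> In (att_block 0 0 0 c i) all.
Proof.
  intros Hi; right; apply in_app_iff; left; apply in_app_iff; left; apply in_map, in_seq; lia.
Qed.

Lemma hon_block_is_uncle j : (1 <= j <= cnt Hon c)%nat ->
  is_uncle all (hon_block 0 0 0 c bs j) = (j =? 1)%nat || nth (j - 1) bs false.
Proof.
  intros Hj; unfold is_uncle; cbn [hon_block boff bparent negb andb Nat.add].
  destruct (Nat.eqb_spec j 1); [reflexivity|]; simpl orb.
  destruct (nth (j - 1) bs false).
  - apply existsb_exists; exists (att_block 0 0 0 c (j - 1)); split.
    + apply att_block_in_all; lia.
    + cbn; rewrite Nat.eqb_refl; reflexivity.
  - apply not_true_is_false; rewrite existsb_exists; intros [x [Hx Hid]].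
    apply andb_prop in Hid as [Hid Hoff]; apply Nat.eqb_eq in Hid.
    pose proof (occ_pos_bounds Hon c (j - 1) ltac:(lia)).
    apply in_all_blocks in Hx as [->|[[i [Hi ->]]|[[j' [_ ->]]|Hx]]].
    + simpl in Hid; lia.
    + apply (occ_pos_Att_Hon c i (j - 1)); [assumption|lia|exact Hid].
    + discriminate Hoff.
    + destruct (proj1 HB2 x Hx); lia.
Qed.

Lemma can_refer_hon_block j x :
  can_refer n1 (hon_block 0 0 0 c bs j) x = true <->
  (boff x = true /\ j < bheight x /\ bheight x - j <= n1 /\ occ_pos Hon c j < bmined x)%nat.
Proof. apply can_refer_Hon; reflexivity. Qed.

(* All attacker blocks are mined before the final honest run is published. *)
Lemma att_block_cannot_refer_late i j : (1 <= i <= cnt Att c)%nat -> (cnt Hon u < j)%nat ->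
  can_refer n1 (hon_block 0 0 0 c bs j) (att_block 0 0 0 c i) = false.
Proof.
  intros Hi Hj; apply not_true_is_false; rewrite can_refer_hon_block; cbn; intros [_ [_ [_ Hlt]]].
  unfold c in *; rewrite cnt_Att_app_Att in Hi.
  pose proof (occ_pos_Att_app_Att u t i Hi); pose proof (occ_pos_Hon_app_Att_late u t j Ht Hj); lia.
Qed.

Lemma referrer_in_B2 j y : (cnt Hon u < j)%nat -> In y all ->
  can_refer n1 (hon_block 0 0 0 c bs j) y = true -> In y B2.
Proof.
  intros Hj Hy Hr; apply in_all_blocks in Hy as [->|[[i [Hi ->]]|[[j' [_ ->]]|Hy]]];
    [discriminate Hr| |discriminate Hr|exact Hy].
  rewrite att_block_cannot_refer_late in Hr by assumption; discriminate.
Qed.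

Lemma hon_block_referred_early j : (1 <= j <= cnt Hon u)%nat ->
  referred_by_honest n1 all (hon_block 0 0 0 c bs j) = false.
Proof.
  intros Hj; apply not_true_is_false; rewrite referred_by_honest_iff.
  intros [x [Hx [Hrx [Hmx Hmin]]]].
  (* x belongs to the next cycle, above the attacker's last block, which can refer the uncle. *)
  apply in_all_blocks in Hx as [->|[[i [_ ->]]|[[j' [_ ->]]|Hx]]];
    [discriminate Hrx|discriminate Hmx|discriminate Hrx|].
  destruct (proj1 HB2 x Hx) as [_ [_ Hhx]].
  apply can_refer_hon_block in Hrx as [_ [_ [Hdist _]]].
  assert (Hlast : can_refer n1 (hon_block 0 0 0 c bs j) (att_block 0 0 0 c (cnt Att c)) = true).
  { apply can_refer_hon_block.
    pose proof (occ_pos_Hon_app_Att_early u t j Hj); pose proof (cnt_Hon_app_Att u t).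
    unfold c in *; cbn; rewrite cnt_Att_app_Att in *; rewrite occ_pos_Att_app_Att_last.
    split; [reflexivity|lia]. }
  specialize (Hmin _ (att_block_in_all (cnt Att c) ltac:(lia)) Hlast); cbn in Hmin; lia.
Qed.

Lemma hon_block_referred_late j : (cnt Hon u < j <= cnt Hon c)%nat ->
  referred_by_honest n1 all (hon_block 0 0 0 c bs j) = (cnt Hon c + 2 <=? j + n1)%nat && hon.
Proof.
  intros Hj; destruct HB2 as [Hnext [z [Hz [Hzoff [Hzh Hzfirst]]]]].
  pose proof (occ_pos_bounds Hon c j ltac:(lia)) as Hpos.
  destruct (Nat.leb_spec (cnt Hon c + 2) (j + n1)) as [Hd|Hd]; simpl andb.
  - (* The lowest block able to refer the uncle is the first block of the next cycle. *)
    assert (Hzall : In z all) by (right; apply in_app_iff; right; exact Hz).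
    rewrite (referred_by_honest_lowest n1 all _ z Hzall).
    + pose proof (Hzfirst z Hz Hzoff Hzh) as Hzm.
      destruct hon, (bminer z); try reflexivity;
        [discriminate (proj2 Hzm eq_refl)|discriminate (proj1 Hzm eq_refl)].
    + apply can_refer_hon_block; destruct (Hnext z Hz); split; [exact Hzoff|lia].
    + intros y Hy Hry; pose proof (referrer_in_B2 j y (proj1 Hj) Hy Hry) as HyB2.
      destruct (Hnext y HyB2) as [_ [_ Hyh]]; split; [lia|]; intros Hyz.
      apply can_refer_hon_block in Hry as [Hyoff _].
      assert (Hy1 := Hzfirst y HyB2 Hyoff ltac:(lia)); assert (Hz1 := Hzfirst z Hz Hzoff Hzh).
      destruct (bminer y), (bminer z); try reflexivity;
        [apply Hy1, Hz1|symmetry; apply Hz1, Hy1]; reflexivity.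
  - apply not_true_is_false; rewrite referred_by_honest_iff; intros [x [Hx [Hrx _]]].
    pose proof (referrer_in_B2 j x (proj1 Hj) Hx Hrx) as HxB2.
    destruct (Hnext x HxB2) as [_ [_ Hxh]]; apply can_refer_hon_block in Hrx; lia.
Qed.

Lemma honest_refs_attacker_wins :
  honest_refs n1 all B1 =
  if hon then length (filter (fun j => ((cnt Hon u <? j) && (cnt Hon c + 2 <=? j + n1))%nat
                                    && ((j =? 1)%nat || nth (j - 1) bs false))
                       (seq 1 (cnt Hon c)))
  else 0%nat.
Proof.
  unfold honest_refs, B1; rewrite filter_app, length_app.
  rewrite (filter_ext_in _ (fun _ => false))
    by (intros x Hx; apply in_map_iff in Hx as [i [<- _]]; reflexivity).
  rewrite filter_false, filter_map_swap, length_map; cbn [length Nat.add].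
  transitivity (length (filter (fun j =>
    hon && (((cnt Hon u <? j) && (cnt Hon c + 2 <=? j + n1))%nat
            && ((j =? 1)%nat || nth (j - 1) bs false))) (seq 1 (cnt Hon c)))).
  - apply f_equal, filter_ext_in; intros j Hj; apply in_seq in Hj.
    rewrite hon_block_is_uncle by lia.
    destruct (Nat.ltb_spec (cnt Hon u) j).
    + rewrite hon_block_referred_late by lia.
      destruct hon, (_ || _), (cnt Hon c + 2 <=? j + n1)%nat; reflexivity.
    + rewrite hon_block_referred_early by lia; destruct hon, (_ || _); reflexivity.
  - destruct hon; [reflexivity|]; simpl andb; rewrite filter_false; reflexivity.
Qed.

End AttackerWins.

(* The cycles SHS and SHH: the uncle has height 1 and b3 is the only block of height 2. *)
Lemma referred_by_height2 n1 b1 b2 b3 B2 u :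
  bheight u = 1%nat -> bheight b1 = 1%nat -> bheight b2 = 1%nat -> bheight b3 = 2%nat ->
  (forall x, In x B2 -> 2 < bheight x)%nat -> can_refer n1 u b3 = true ->
  referred_by_honest n1 (base_block :: b1 :: b2 :: b3 :: B2) u = miner_eqb (bminer b3) Hon.
Proof.
  intros Hu H1 H2 H3 HB2 Hr3; apply referred_by_honest_lowest; [simpl; tauto|exact Hr3|].
  intros y Hy Hry.
  assert (Hhy : (bheight u < bheight y)%nat)
    by (unfold can_refer in Hry; apply andb_prop in Hry as [Hry _];
        apply andb_prop in Hry as [Hry _]; apply andb_prop in Hry as [_ Hry];
        apply Nat.ltb_lt; exact Hry).
  destruct Hy as [<-|[<-|[<-|[<-|Hy]]]]; simpl in Hhy; try lia; [split; auto|].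
  specialize (HB2 y Hy); split; lia.
Qed.

Lemma honest_refs_cycle n1 c bs hon B2 : (1 <= n1)%nat -> is_cycleb c = true ->
  next_cycle_spec (length c) (snd (snd (cycle_blocks 0 0 0 c bs))) hon B2 ->
  honest_refs n1 (base_block :: fst (cycle_blocks 0 0 0 c bs) ++ B2) (fst (cycle_blocks 0 0 0 c bs))
  = (inner_refs c + if hon then outer_refs n1 c bs else 0)%nat.
Proof.
  intros Hn1 Hc [Hnext Hfirst]; apply is_cycleb_cases in Hc as [->|[->|[->|[w [-> Hw]]]]].
  - destruct hon; reflexivity.
  - unfold honest_refs; cbn -[referred_by_honest].
    rewrite referred_by_height2; try reflexivity.
    + destruct hon; reflexivity.
    + intros x Hx; apply (Hnext x Hx).
    + apply can_refer_Hon; [reflexivity|]; simpl; lia.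
  - unfold honest_refs; simpl (fst _); destruct (nth 1 bs false); cbn -[referred_by_honest];
      (rewrite referred_by_height2; try reflexivity;
       [destruct hon; reflexivity
       |intros x Hx; apply (Hnext x Hx)
       |unfold can_refer, knows; simpl; destruct n1; [lia|reflexivity]]).
  - set (c := Att :: Att :: w ++ [Hon]) in *.
    assert (Hab : cnt Att c = S (cnt Hon c))
      by (unfold c; rewrite !cnt_cons, !cnt_app, !cnt_cons; change (cnt ?m []) with 0%nat;
          pose proof (dyck_cnt w Hw); simpl; lia).
    assert (Ht : (1 <= trail c)%nat) by (unfold c; rewrite trail_SS; lia).
    assert (Hout : outer_refs n1 c bs =
      length (filter (fun j => ((cnt Hon c - trail c <? j) && (cnt Hon c + 2 <=? j + n1))%nat
                               && ((j =? 1)%nat || nth (j - 1) bs false)) (seq 1 (cnt Hon c))))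
      by reflexivity.
    change (inner_refs c) with 0%nat; rewrite Hout.
    rewrite (cycle_blocks_SS 0 0 0 c bs (w ++ [Hon]) eq_refl) in *; cbn [fst snd Nat.add] in *.
    destruct (trail_decomp c) as [u Hu]; [lia|].
    set (t := trail c) in *; clearbody t c; subst c.
    rewrite (honest_refs_attacker_wins n1 u t bs hon B2) by (try split; assumption).
    rewrite cnt_Hon_app_Att, Nat.add_sub; reflexivity.
Qed.

Lemma Uh_split n1 c1 bs1 c2 bs2 : (1 <= n1)%nat -> is_cycleb c1 = true -> is_cycleb c2 = true ->
  Uh n1 c1 bs1 c2 bs2
  = (inner_refs c1 + if starts_honest c2 bs2 then outer_refs n1 c1 bs1 else 0)%nat.
Proof.
  intros Hn1 Hc1 Hc2; rewrite Uh_honest_refs.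
  apply honest_refs_cycle; [exact Hn1|exact Hc1|apply cycle_blocks_spec; exact Hc2].
Qed.

(** * Averaging over the parent bits *)

Definition Ebits (g : R) (n : nat) (f : list bool -> R) : R :=
  sumR (map (fun bs => bits_prob g bs * f bs) (bitlists n)).

Lemma Ebits_const g n c : Ebits g n (fun _ => c) = c.
Proof.
  unfold Ebits; induction n as [|n IH]; simpl; [lra|].
  rewrite sumR_flat_map; etransitivity; [|exact IH].
  apply sumR_map_ext; intros bs _; simpl; ring.
Qed.

Lemma Ebits_nth g n i : (i < n)%nat -> Ebits g n (fun bs => if nth i bs false then 1 else 0) = g.
Proof.
  unfold Ebits; revert i; induction n as [|n IH]; intros i Hi; [lia|]; simpl; rewrite sumR_flat_map.
  destruct i as [|i].
  - etransitivity; [|apply (Ebits_const g n g)]; apply sumR_map_ext; intros bs _; simpl; ring.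
  - etransitivity; [|apply (IH i); lia]; apply sumR_map_ext; intros bs _; simpl; ring.
Qed.

Lemma bits_prob_total g n : sumR (map (bits_prob g) (bitlists n)) = 1.
Proof.
  rewrite <- (Ebits_const g n 1); unfold Ebits; apply sumR_map_ext; intros; ring.
Qed.

Lemma Ebits_indep g n m (a : R) (f h : list bool -> R) :
  sumR (map (fun b1 => sumR (map (fun b2 =>
      bits_prob g b1 * bits_prob g b2 * (a + h b2 * f b1)) (bitlists m))) (bitlists n))
  = a + Ebits g n f * Ebits g m h.
Proof.
  rewrite (sumR_map_ext _ (fun b1 =>
      sumR (map (fun b2 => (bits_prob g b1 * a) * bits_prob g b2) (bitlists m))
      + sumR (map (fun b2 => (bits_prob g b1 * f b1) * (bits_prob g b2 * h b2)) (bitlists m)))).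
  - rewrite sumR_map_add, !sumR_map_mul, bits_prob_total.
    fold (Ebits g n (fun _ => a)) (Ebits g n f) (Ebits g m h); rewrite Ebits_const; ring.
  - intros b1 _; rewrite <- sumR_map_add; apply sumR_map_ext; intros; ring.
Qed.

Lemma Ebits_sumR {A} g n (F : A -> list bool -> R) l :
  Ebits g n (fun bs => sumR (map (fun j => F j bs) l)) = sumR (map (fun j => Ebits g n (F j)) l).
Proof.
  unfold Ebits; rewrite <- sumR_swap; apply sumR_map_ext; intros bs _.
  rewrite <- sumR_map_scal; reflexivity.
Qed.

Lemma Ebits_uncle g n j : (1 <= j <= n)%nat ->
  Ebits g n (fun bs => if (j =? 1)%nat || nth (j - 1) bs false then 1 else 0)
  = if (j =? 1)%nat then 1 else g.
Proof.
  intros Hj; destruct (Nat.eqb_spec j 1); [apply (Ebits_const g n 1)|apply Ebits_nth; lia].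
Qed.

(* The uncle of height 1 always counts, the others with probability g. *)
Lemma sum_uncle_weights g L b : (1 <= b)%nat ->
  sumR (map (fun j => if (L <? j)%nat then (if (j =? 1)%nat then 1 else g) else 0) (seq 1 b))
  = g * INR (b - L) + (1 - g) * (if (L =? 0)%nat then 1 else 0).
Proof.
  intros Hb.
  rewrite (sumR_map_ext _ (fun j =>
      g * (if (L <? j)%nat then 1 else 0)
      + (1 - g) * (if (j =? 1)%nat then (if (L <? j)%nat then 1 else 0) else 0)))
    by (intros j _; destruct (L <? j)%nat, (j =? 1)%nat; ring).
  rewrite sumR_map_add, !sumR_map_scal, <- INR_length_filter, length_filter_seq_gt, sumR_seq_spike.
  destruct (Nat.leb_spec 1 1), (Nat.ltb_spec 1 (1 + b)); try lia; simpl.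
  destruct L; reflexivity.
Qed.

Lemma sum_staircase_weights g T K m :
  sumR (map (fun i => g * (if (i <=? T)%nat then 1 else 0)
                      + (1 - g) * (if (i =? K)%nat then (if (i <=? T)%nat then 1 else 0) else 0))
            (seq 0 m))
  = g * INR (Nat.min (S T) m) + (1 - g) * (if ((K <=? T) && (K <? m))%nat then 1 else 0).
Proof.
  rewrite sumR_map_add, !sumR_map_scal, <- INR_length_filter, length_filter_seq_le, sumR_seq_spike.
  rewrite Nat.add_0_l; destruct (K <=? T)%nat, (K <? m)%nat; reflexivity.
Qed.

Definition E_outer (g : R) (n1 : nat) (c : list miner) : R :=
  Ebits g (nHon c) (fun bs => INR (outer_refs n1 c bs)).

Definition E_start (g : R) (c : list miner) : R :=
  Ebits g (nHon c) (fun bs => if starts_honest c bs then 1 else 0).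

Lemma nHon_SS w : nHon (Att :: Att :: w ++ [Hon]) = S (nHon w).
Proof.
  change (cnt Hon (Att :: Att :: w ++ [Hon]) = S (cnt Hon w)).
  rewrite !cnt_cons, cnt_app, cnt_cons; change (cnt Hon []) with 0%nat; simpl; lia.
Qed.

(* The index i stands for nHon c - j, the depth of the uncle j below the top of the fork. *)
Lemma E_outer_SS g n1 w :
  E_outer g n1 (Att :: Att :: w ++ [Hon]) =
  sumR (map (fun i =>
      g * (if (i <=? trail w)%nat then 1 else 0)
      + (1 - g) * (if (i =? nHon w)%nat then (if (i <=? trail w)%nat then 1 else 0) else 0))
    (seq 0 (n1 - 1))).
Proof.
  set (c := Att :: Att :: w ++ [Hon]).
  set (L := Nat.max (nHon c - trail c) (nHon c + 1 - n1)).
  assert (Hb : nHon c = S (nHon w)) by apply nHon_SS.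
  assert (Ht : trail c = S (trail w)) by apply trail_SS.
  pose proof (trail_le_cnt w : trail w <= nHon w)%nat as HTK.
  unfold E_outer.
  transitivity (Ebits g (nHon c) (fun bs => sumR (map (fun j =>
      if (L <? j)%nat then (if (j =? 1)%nat || nth (j - 1) bs false then 1 else 0) else 0)
      (seq 1 (nHon c))))).
  { apply sumR_map_ext; intros bs _; f_equal.
    change (outer_refs n1 c bs) with (length (filter (fun j =>
      ((nHon c - trail c <? j) && (nHon c + 2 <=? j + n1))%nat
      && ((j =? 1)%nat || nth (j - 1) bs false)) (seq 1 (nHon c)))).
    rewrite INR_length_filter; apply sumR_map_ext; intros j Hj; apply in_seq in Hj.
    replace ((nHon c - trail c <? j) && (nHon c + 2 <=? j + n1))%nat with (L <? j)%nat
      by (destruct (Nat.ltb_spec L j), (Nat.ltb_spec (nHon c - trail c) j),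
            (Nat.leb_spec (nHon c + 2) (j + n1)); simpl; lia).
    destruct (L <? j)%nat; reflexivity. }
  rewrite Ebits_sumR.
  rewrite (sumR_map_ext _ (fun j => if (L <? j)%nat then (if (j =? 1)%nat then 1 else g) else 0)).
  2:{ intros j Hj; apply in_seq in Hj.
      destruct (L <? j)%nat; [apply Ebits_uncle; lia|apply Ebits_const]. }
  rewrite sum_uncle_weights, sum_staircase_weights by lia.
  unfold L; rewrite Hb, Ht.
  replace (S (nHon w) - Nat.max (S (nHon w) - S (trail w)) (S (nHon w) + 1 - n1))%nat
    with (Nat.min (S (trail w)) (n1 - 1)) by lia.
  f_equal; f_equal.
  destruct (Nat.eqb_spec (Nat.max (S (nHon w) - S (trail w)) (S (nHon w) + 1 - n1)) 0),
    (Nat.leb_spec (nHon w) (trail w)), (Nat.ltb_spec (nHon w) (n1 - 1)); simpl; lia || reflexivity.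
Qed.

Lemma sumR_cycles (phi : list miner -> R) n :
  sumR (map phi (filter is_cycleb (words n))) =
  (if (n =? 1)%nat then phi [Hon] else 0)
  + (if (n =? 3)%nat then phi [Att; Hon; Att] + phi [Att; Hon; Hon] else 0)
  + (if (3 <=? n)%nat
     then sumR (map (fun w => if is_dyck w then phi (Att :: Att :: w ++ [Hon]) else 0)
                    (words (n - 3)))
     else 0).
Proof.
  rewrite sumR_filter.
  destruct n as [|[|[|[|m]]]]; [simpl; lra..|].
  rewrite sumR_words_S, sumR_map_add.
  rewrite (sumR_map_eq0 (fun w => if is_cycleb (Hon :: w) then phi (Hon :: w) else 0))
    by (intros w Hw; apply words_length in Hw; destruct w; [discriminate|reflexivity]).
  rewrite sumR_words_S, sumR_map_add.
  rewrite (sumR_map_eq0 (fun w => if is_cycleb (Att :: Hon :: w) then phi (Att :: Hon :: w) else 0))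
    by (intros w Hw; apply words_length in Hw; destruct w as [|[] [|]]; try discriminate;
        reflexivity).
  rewrite (sumR_words_S_rcons
             (fun w => if is_cycleb (Att :: Att :: w) then phi (Att :: Att :: w) else 0)).
  cbn [Nat.eqb Nat.leb Nat.sub]; rewrite !Rplus_0_l, !Rplus_0_r.
  apply sumR_map_ext; intros w _; rewrite !is_cycleb_SS; simpl; lra.
Qed.

Definition cycle_mass (p q : R) (f : list miner -> R) (n : nat) : R :=
  sumR (map (fun c => cyc_prob p q c * f c) (filter is_cycleb (words n))).

Lemma cycle_mass_eq p q f n :
  cycle_mass p q f n =
  (if (n =? 1)%nat then p * f [Hon] else 0)
  + (if (n =? 3)%nat then q * p * q * f [Att; Hon; Att] + q * p * p * f [Att; Hon; Hon] else 0)
  + (if (3 <=? n)%nat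
     then q * q * p * sumR (map (fun w =>
            if is_dyck w then cyc_prob p q w * f (Att :: Att :: w ++ [Hon]) else 0) (words (n - 3)))
     else 0).
Proof.
  unfold cycle_mass; rewrite sumR_cycles.
  f_equal; [f_equal; destruct (n =? 1)%nat, (n =? 3)%nat; simpl; ring|].
  destruct (3 <=? n)%nat; [|reflexivity].
  rewrite <- sumR_map_scal; apply sumR_map_ext; intros w _.
  destruct (is_dyck w); [|ring].
  change (cyc_prob p q (Att :: Att :: w ++ [Hon])) with (q * (q * cyc_prob p q (w ++ [Hon]))).
  rewrite cyc_prob_app; simpl; ring.
Qed.

Lemma cycle_mass_inner p q n :
  cycle_mass p q (fun c => INR (inner_refs c)) n = if (n =? 3)%nat then q * p * p else 0.
Proof.
  rewrite cycle_mass_eq, (sumR_map_eq0 (fun w => if is_dyck w then _ else 0))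
    by (intros w _; destruct (is_dyck w); simpl; ring).
  destruct (n =? 1)%nat, (n =? 3)%nat, (3 <=? n)%nat; simpl; ring.
Qed.

Lemma cycle_mass_start p q g n :
  cycle_mass p q (E_start g) n =
  (if (n =? 1)%nat then p else 0) + (if (n =? 3)%nat then q * p * p * (1 - g) else 0).
Proof.
  rewrite cycle_mass_eq, (sumR_map_eq0 (fun w => if is_dyck w then _ else 0)).
  - destruct (n =? 1)%nat, (n =? 3)%nat, (3 <=? n)%nat; unfold E_start, Ebits; simpl; ring.
  - intros w _; destruct (is_dyck w); [|reflexivity].
    unfold E_start, Ebits; rewrite sumR_map_eq0; [ring|]; intros bs _; simpl; ring.
Qed.

Lemma cycle_mass_one p q n :
  cycle_mass p q (fun _ => 1) n =
  (if (n =? 1)%nat then p else 0) + (if (n =? 3)%nat then q * p * q + q * p * p else 0)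
  + (if (3 <=? n)%nat then q * q * p * dyck_mass p q (n - 3) 0 else 0).
Proof.
  rewrite cycle_mass_eq; f_equal; [f_equal; destruct (n =? 1)%nat, (n =? 3)%nat; ring|].
  destruct (3 <=? n)%nat; [|reflexivity]; f_equal.
  apply sumR_map_ext; intros w _; unfold is_dyck; destruct (dyck_aux 0 w); ring.
Qed.

Definition trail_mass (p q : R) (i m : nat) : R :=
  sumR (map (fun w => if is_dyck w && (i <=? trail w)%nat then cyc_prob p q w else 0) (words m)).

Definition stair_mass (p q : R) (i m : nat) : R :=
  sumR (map (fun w =>
    if is_dyck w && (i =? nHon w)%nat && (i <=? trail w)%nat then cyc_prob p q w else 0) (words m)).

Lemma cycle_mass_outer p q g n1 n :
  cycle_mass p q (E_outer g n1) n =
  if (3 <=? n)%nat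
  then q * q * p * sumR (map (fun i =>
         g * trail_mass p q i (n - 3) + (1 - g) * stair_mass p q i (n - 3)) (seq 0 (n1 - 1)))
  else 0.
Proof.
  rewrite cycle_mass_eq.
  replace (E_outer g n1 [Hon]) with 0 by (symmetry; apply (Ebits_const g _ 0)).
  replace (E_outer g n1 [Att; Hon; Att]) with 0 by (symmetry; apply (Ebits_const g _ 0)).
  replace (E_outer g n1 [Att; Hon; Hon]) with 0 by (symmetry; apply (Ebits_const g _ 0)).
  replace (if (n =? 1)%nat then p * 0 else 0) with 0 by (destruct (n =? 1)%nat; ring).
  replace (if (n =? 3)%nat then q * p * q * 0 + q * p * p * 0 else 0) with 0
    by (destruct (n =? 3)%nat; ring).
  rewrite !Rplus_0_l; destruct (3 <=? n)%nat; [|reflexivity]; f_equal.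
  unfold trail_mass, stair_mass.
  rewrite (sumR_map_ext (fun i => _ + _) (fun i => sumR (map (fun w =>
      if is_dyck w then cyc_prob p q w *
        (g * (if (i <=? trail w)%nat then 1 else 0)
         + (1 - g) * (if (i =? nHon w)%nat then (if (i <=? trail w)%nat then 1 else 0) else 0))
      else 0) (words (n - 3)))))
    by (intros i _; rewrite <- !sumR_map_scal, <- sumR_map_add; apply sumR_map_ext; intros w _;
        destruct (is_dyck w), (i <=? trail w)%nat, (i =? nHon w)%nat; simpl; ring).
  rewrite <- sumR_swap; apply sumR_map_ext; intros w _.
  destruct (is_dyck w); [|symmetry; apply sumR_map_eq0; reflexivity].
  fold (E_outer g n1 (Att :: Att :: w ++ [Hon])); rewrite E_outer_SS, <- sumR_map_scal.
  apply sumR_map_ext; intros i _; rewrite Nat.eqb_sym; reflexivity.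
Qed.

(* Time reversal turns the final run of down steps into an initial run of up steps. *)
Lemma trail_mass_eq p q i m :
  trail_mass p q i m = if (i <=? m)%nat then q ^ i * dyck_mass p q (m - i) i else 0.
Proof.
  unfold trail_mass; rewrite sumR_words_mirror.
  rewrite (sumR_map_ext _ (fun w =>
    if (i <=? leadA w)%nat then (if is_dyck w then cyc_prob p q w else 0) else 0)).
  2:{ intros w _; rewrite is_dyck_mirror, trail_mirror.
      destruct (is_dyck w) eqn:E, (i <=? leadA w)%nat; simpl; auto using cyc_prob_mirror_dyck. }
  rewrite sumR_words_leadA; destruct (i <=? m)%nat; [|reflexivity].
  unfold dyck_mass; rewrite <- sumR_map_scal; apply sumR_map_ext; intros v _.
  unfold is_dyck; rewrite dyck_aux_repeat_Att; simpl Nat.add.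
  destruct (dyck_aux i v); [|ring]; rewrite cyc_prob_app, cyc_prob_repeat_Att; reflexivity.
Qed.

Definition staircase (k : nat) : list miner := repeat Att k ++ repeat Hon k.

Lemma staircase_props k :
  is_dyck (staircase k) = true /\ nHon (staircase k) = k /\ trail (staircase k) = k.
Proof.
  unfold staircase; split; [|split].
  - unfold is_dyck; rewrite dyck_aux_repeat_Att, dyck_aux_repeat_Hon; apply Nat.eqb_refl.
  - change (cnt Hon (repeat Att k ++ repeat Hon k) = k); rewrite cnt_app, !cnt_repeat; simpl; lia.
  - destruct k as [|k]; [reflexivity|].
    change (repeat Att (S k)) with (Att :: repeat Att k); rewrite repeat_cons, <- app_assoc.
    apply trail_app_Att.
Qed.

Lemma staircase_unique k w :
  is_dyck w = true -> nHon w = k -> (k <= trail w)%nat -> w = staircase k.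
Proof.
  intros Hd Hn Hk; change (nHon w) with (cnt Hon w) in Hn.
  pose proof (dyck_cnt w Hd) as Hc; pose proof (trail_le_cnt w).
  destruct (Nat.eq_dec (cnt Att w) 0) as [E|E].
  - assert (length w = 0%nat) by (rewrite length_cnt; lia).
    destruct w; [subst k; reflexivity|discriminate].
  - destruct (trail_decomp w ltac:(lia)) as [u Hu].
    replace (trail w) with k in Hu by lia; rewrite Hu in Hc, Hn |- *.
    rewrite cnt_Att_app_Att, cnt_Hon_app_Att in *.
    assert (Hu0 : cnt Hon u = 0%nat) by lia.
    assert (Hru : u = repeat Att (length u)).
    { clear - Hu0; induction u as [|[] u IH]; rewrite ?cnt_cons in Hu0; simpl in *;
        f_equal; auto; lia. }
    pose proof (length_cnt u).
    unfold staircase; replace k with (S (length u)) by lia.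
    set (l := length u) in *; rewrite Hru.
    change (repeat Att (S l)) with (Att :: repeat Att l).
    rewrite repeat_cons, <- app_assoc; reflexivity.
Qed.

Lemma stair_mass_eq p q i m : stair_mass p q i m = if (i + i =? m)%nat then (p * q) ^ i else 0.
Proof.
  destruct (staircase_props i) as [Hd [Hn Ht]].
  unfold stair_mass; rewrite (sumR_words_unique _ _ (staircase i)).
  - unfold staircase; rewrite length_app, !repeat_length.
    rewrite cyc_prob_app, cyc_prob_repeat_Att, cyc_prob_cnt, cnt_repeat, cnt_repeat; simpl.
    rewrite Rpow_mult_distr; destruct (i + i =? m)%nat; ring.
  - rewrite Hd, Hn, Ht, Nat.eqb_refl, Nat.leb_refl; reflexivity.
  - intros w Hw; apply andb_prop in Hw as [Hw Hk]; apply andb_prop in Hw as [Hw Hn'].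
    apply staircase_unique; [exact Hw|symmetry; apply Nat.eqb_eq; exact Hn'|].
    apply Nat.leb_le; exact Hk.
Qed.

Lemma Uh_term_convolution p q g n1 N : (1 <= n1)%nat ->
  Uh_term p q g n1 N =
  sumR (map (fun k =>
      cycle_mass p q (fun c => INR (inner_refs c)) k * cycle_mass p q (fun _ => 1) (N - k)
      + cycle_mass p q (E_outer g n1) k * cycle_mass p q (E_start g) (N - k)) (seq 0 (S N))).
Proof.
  intros Hn1; unfold Uh_term, cycle_mass; apply sumR_map_ext; intros k _.
  rewrite <- !sumR_map_mul, <- sumR_map_add; apply sumR_map_ext; intros c1 Hc1.
  rewrite <- sumR_map_add; apply sumR_map_ext; intros c2 Hc2.
  apply filter_In in Hc1 as [_ Hc1]; apply filter_In in Hc2 as [_ Hc2].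
  transitivity (cyc_prob p q c1 * cyc_prob p q c2 *
    sumR (map (fun b1 => sumR (map (fun b2 => bits_prob g b1 * bits_prob g b2 *
      (INR (inner_refs c1) + (if starts_honest c2 b2 then 1 else 0) * INR (outer_refs n1 c1 b1)))
      (bitlists (nHon c2)))) (bitlists (nHon c1)))).
  - rewrite <- sumR_map_scal; apply sumR_map_ext; intros b1 _.
    rewrite <- sumR_map_scal; apply sumR_map_ext; intros b2 _.
    rewrite Uh_split, plus_INR by assumption; destruct (starts_honest c2 b2); simpl; ring.
  - rewrite Ebits_indep; unfold E_outer, E_start; ring.
Qed.

Lemma infinite_sum_ext s t l : (forall n, s n = t n) -> infinite_sum s l -> infinite_sum t l.
Proof.
  intros H Hs eps He; destruct (Hs eps He) as [N HN]; exists N; intros n Hn.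
  rewrite <- (sum_eq s t n) by auto; apply HN; exact Hn.
Qed.

Lemma infinite_sum_plus s t l1 l2 :
  infinite_sum s l1 -> infinite_sum t l2 -> infinite_sum (fun n => s n + t n) (l1 + l2).
Proof.
  intros H1 H2; unfold infinite_sum.
  apply (Un_cv_ext (fun n => sum_f_R0 s n + sum_f_R0 t n)); [intros n; symmetry; apply sum_plus|].
  apply CV_plus; assumption.
Qed.

Lemma infinite_sum_scal a s l : infinite_sum s l -> infinite_sum (fun n => a * s n) (a * l).
Proof.
  intros H; unfold infinite_sum.
  apply (Un_cv_ext (fun n => a * sum_f_R0 s n));
    [intros n; rewrite scal_sum; apply sum_eq; intros; ring|].
  apply CV_mult; [apply Un_cv_const|exact H].
Qed.

Definition delay (j : nat) (s : nat -> R) (n : nat) : R :=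
  if (j <=? n)%nat then s (n - j)%nat else 0.

Lemma sum_f_R0_delay j s N :
  sum_f_R0 (delay j s) N = if (j <=? N)%nat then sum_f_R0 s (N - j) else 0.
Proof.
  unfold delay; induction N as [|N IH].
  - destruct j; reflexivity.
  - rewrite tech5, IH.
    destruct (Nat.leb_spec j N), (Nat.leb_spec j (S N)); try lia.
    + rewrite (Nat.sub_succ_l j N) by lia; reflexivity.
    + replace j with (S N) by lia; rewrite Nat.sub_diag; simpl; ring.
    + ring.
Qed.

Lemma infinite_sum_delay j s l : infinite_sum s l -> infinite_sum (delay j s) l.
Proof.
  intros H eps He; destruct (H eps He) as [N HN]; exists (N + j)%nat; intros n Hn.
  rewrite sum_f_R0_delay; destruct (Nat.leb_spec j n); [apply HN|]; lia.
Qed.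

Lemma infinite_sum_point j c : infinite_sum (fun n => if (n =? j)%nat then c else 0) c.
Proof.
  apply (infinite_sum_ext (delay j (fun n => if (n =? 0)%nat then c else 0))).
  - intros n; unfold delay.
    destruct (Nat.leb_spec j n), (Nat.eqb_spec n j), (Nat.eqb_spec (n - j) 0); reflexivity || lia.
  - apply infinite_sum_delay; intros eps He; exists 0%nat; intros n _.
    replace (sum_f_R0 _ n) with c by (induction n as [|n IH]; simpl; [|rewrite <- IH]; ring).
    unfold Rdist; rewrite Rminus_diag, Rabs_R0; exact He.
Qed.

Lemma infinite_sum_sumR {A} (s : A -> nat -> R) (l : A -> R) (L : list A) :
  (forall i, In i L -> infinite_sum (s i) (l i)) ->
  infinite_sum (fun n => sumR (map (fun i => s i n) L)) (sumR (map l L)).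
Proof.
  induction L as [|i L IH]; intros H; simpl.
  - apply (infinite_sum_ext (fun n => if (n =? 0)%nat then 0 else 0));
      [intros n; destruct (n =? 0)%nat; reflexivity|apply infinite_sum_point].
  - apply infinite_sum_plus; [apply H; left; reflexivity|].
    apply IH; intros; apply H; right; assumption.
Qed.

Lemma convolution_point_l (f : nat -> R) a j N :
  sumR (map (fun k => (if (k =? j)%nat then a else 0) * f (N - k)%nat) (seq 0 (S N)))
  = delay j (fun n => a * f n) N.
Proof.
  rewrite (sumR_map_ext _ (fun k => if (k =? j)%nat then a * f (N - k)%nat else 0))
    by (intros k _; destruct (k =? j)%nat; ring).
  rewrite sumR_seq_spike; unfold delay.
  destruct (Nat.leb_spec j N), (Nat.ltb_spec j (0 + S N)); simpl; reflexivity || lia.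
Qed.

Lemma convolution_point_r (f : nat -> R) a j N :
  sumR (map (fun k => f k * (if (N - k =? j)%nat then a else 0)) (seq 0 (S N)))
  = delay j (fun n => a * f n) N.
Proof.
  rewrite (sumR_map_ext _ (fun k =>
    if (k =? N - j)%nat then (if (j <=? N)%nat then a * f k else 0) else 0)).
  - rewrite sumR_seq_spike; unfold delay.
    destruct (Nat.leb_spec j N); [|destruct (_ && _)%bool; reflexivity].
    destruct (Nat.ltb_spec (N - j) (0 + S N)); simpl; [reflexivity|lia].
  - intros k Hk; apply in_seq in Hk.
    destruct (Nat.eqb_spec (N - k) j), (Nat.eqb_spec k (N - j)), (Nat.leb_spec j N); try lia; ring.
Qed.

Section Series.

Variables p q g : R.
Variable n1 : nat.
Hypotheses (Hq : 0 < q) (Hqp : q < p) (Hpq : p + q = 1).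

Lemma cycle_mass_one_series : infinite_sum (cycle_mass p q (fun _ => 1)) 1.
Proof.
  apply (infinite_sum_ext (fun n => (if (n =? 1)%nat then p else 0)
                                    + (if (n =? 3)%nat then q * p * q + q * p * p else 0)
                                    + delay 3 (fun m => q * q * p * dyck_mass p q m 0) n));
    [intros n; rewrite cycle_mass_one; reflexivity|].
  replace 1 with (p + (q * p * q + q * p * p) + q * q * p * (1 / p))
    by (field_simplify; [replace p with (1 - q) by lra; field|]; lra).
  apply infinite_sum_plus; [apply infinite_sum_plus; apply infinite_sum_point|].
  apply infinite_sum_delay, infinite_sum_scal, dyck_mass_series; assumption.
Qed.

Lemma trail_mass_series i : infinite_sum (trail_mass p q i) (q ^ i * (1 / p)).
Proof.
  apply (infinite_sum_ext (delay i (fun m => q ^ i * dyck_mass p q m i)));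
    [intros n; rewrite trail_mass_eq; reflexivity|].
  apply infinite_sum_delay, infinite_sum_scal, dyck_mass_series; assumption.
Qed.

Lemma stair_mass_series i : infinite_sum (stair_mass p q i) ((p * q) ^ i).
Proof.
  apply (infinite_sum_ext (fun n => if (n =? i + i)%nat then (p * q) ^ i else 0));
    [intros n; rewrite stair_mass_eq, Nat.eqb_sym; reflexivity|apply infinite_sum_point].
Qed.

Lemma cycle_mass_outer_series :
  infinite_sum (cycle_mass p q (E_outer g n1))
    (q * q * p *
     sumR (map (fun i => g * (q ^ i * (1 / p)) + (1 - g) * (p * q) ^ i) (seq 0 (n1 - 1)))).
Proof.
  apply (infinite_sum_ext (delay 3 (fun m => q * q * p *
           sumR (map (fun i => g * trail_mass p q i m + (1 - g) * stair_mass p q i m)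
                     (seq 0 (n1 - 1))))));
    [intros n; rewrite cycle_mass_outer; reflexivity|].
  apply infinite_sum_delay, infinite_sum_scal.
  apply (infinite_sum_sumR (fun i m => g * trail_mass p q i m + (1 - g) * stair_mass p q i m)).
  intros i _; apply infinite_sum_plus; apply infinite_sum_scal;
    [apply trail_mass_series|apply stair_mass_series].
Qed.

End Series.

Lemma Uh_term_delays p q g n1 N : (1 <= n1)%nat ->
  Uh_term p q g n1 N =
  delay 3 (fun n => q * p * p * cycle_mass p q (fun _ => 1) n) N
  + delay 1 (fun n => p * cycle_mass p q (E_outer g n1) n) N
  + delay 3 (fun n => q * p * p * (1 - g) * cycle_mass p q (E_outer g n1) n) N.
Proof.
  intros Hn1; rewrite Uh_term_convolution, sumR_map_add by exact Hn1.
  set (D := cycle_mass p q (fun _ => 1)); set (A := cycle_mass p q (E_outer g n1)).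
  rewrite (sumR_map_ext _ (fun k => (if (k =? 3)%nat then q * p * p else 0) * D (N - k)%nat))
    by (intros k _; rewrite cycle_mass_inner; reflexivity).
  rewrite (sumR_map_ext (fun k => A k * cycle_mass p q (E_start g) (N - k))
             (fun k => A k * (if (N - k =? 1)%nat then p else 0)
                       + A k * (if (N - k =? 3)%nat then q * p * p * (1 - g) else 0)))
    by (intros k _; rewrite cycle_mass_start; ring).
  rewrite sumR_map_add, convolution_point_l, !convolution_point_r; ring.
Qed.

Theorem proposition9 (p q g : R) (n1 : nat) :
  0 < q -> q < p -> p + q = 1 -> 0 <= g <= 1 -> (2 <= n1)%nat ->
  infinite_sum (Uh_term p q g n1)
    (p ^ 2 * q
     + (p + (1 - g) * p ^ 2 * q)
       * (q ^ 2 / p * (1 - q ^ (n1 - 1)) * g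
          + (1 - g) * p * q ^ 2 * ((1 - (p * q) ^ (n1 - 1)) / (1 - p * q)))).
Proof.
  intros Hq Hqp Hpq _ Hn1.
  pose proof (cycle_mass_one_series p q Hq Hqp Hpq) as Hone.
  pose proof (cycle_mass_outer_series p q g n1 Hq Hqp Hpq) as Houter.
  match type of Houter with infinite_sum _ ?v => set (O := v) in Houter end.
  eapply infinite_sum_ext; [intros N; symmetry; apply Uh_term_delays; lia|].
  match goal with |- infinite_sum _ ?v =>
    replace v with (q * p * p * 1 + p * O + q * p * p * (1 - g) * O) end.
  - repeat apply infinite_sum_plus; apply infinite_sum_delay, infinite_sum_scal; assumption.
  - unfold O; rewrite sumR_map_add, !sumR_map_scal.
    rewrite (sumR_map_ext (fun i => q ^ i * (1 / p)) (fun i => 1 / p * q ^ i)) by (intros; ring).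
    rewrite sumR_map_scal, !sumR_geom by nra.
    replace (1 - q) with p by lra; field; nra.
Qed.
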